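(* Let $A,B\in\mathcal{F}_2$ be commonly ordered configurations of two robots. There exists a feasible schedule $M$ from $A$ to $B$ with $\Sigma(M)=\sum_{i=1}^2\|a_i-b_i\|$ in which each robot makes at most one turn.
   Context: Robots are axis-parallel unit squares: a robot at $p$ occupies $p+\boxdot$, $\boxdot=\{q:\|q\|_\infty\le1/2\}$. Distances use the $L_1$ norm $\|p\|=|x(p)|+|y(p)|$. A configuration of two robots is a pair $(p_1,p_2)$ with $\|p_1-p_2\|_\infty\ge 1$; $\mathcal{F}_2$ is their set. A trajectory from $a$ to $b$ over $T=[t_0,t_1]$ is a $1$-Lipschitz (w.r.t. $L_1$) map $m:T\to\mathbb{R}^2$, $m(t_0)=a$, $m(t_1)=b$, whose image is a polygonal chain; a turn is a point of the image where two segments of different orientations meet. A schedule $M=(m_1,m_2)$ is feasible if $M(t)\in\mathcal{F}_2$ for all $t$; $\Sigma(M)$ is the sum of the lengths of the chains. The four orderings are $\mathcal{F}_2^{\rightarrow}=\{(p_1,p_2)\in\mathcal{F}_2: x(p_1)\ge x(p_2)+1\}$, $\mathcal{F}_2^{\leftarrow}=\{x(p_2)\ge x(p_1)+1\}$, $\mathcal{F}_2^{\uparrow}=\{y(p_1)\ge y(p_2)+1\}$, $\mathcal{F}_2^{\downarrow}=\{y(p_2)\ge y(p_1)+1\}$. Two configurations are commonly ordered if both lie in the same ordering. *)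

From Stdlib Require Import Reals Lra List.
Open Scope R_scope.

Definition pt : Type := (R * R)%type.
Definition px (p : pt) : R := fst p.
Definition py (p : pt) : R := snd p.
Definition padd (p q : pt) : pt := (px p + px q, py p + py q).
Definition psub (p q : pt) : pt := (px p - px q, py p - py q).
Definition pscale (s : R) (p : pt) : pt := (s * px p, s * py p).

Definition norm1 (p : pt) : R := Rabs (px p) + Rabs (py p).
Definition normInf (p : pt) : R := Rmax (Rabs (px p)) (Rabs (py p)).

(* F_2: configurations of two unit-square robots that do not overlap. *)
Definition in_F2 (p1 p2 : pt) : Prop := normInf (psub p1 p2) >= 1.

Definition ord_right (p1 p2 : pt) : Prop := in_F2 p1 p2 /\ px p1 >= px p2 + 1.
Definition ord_left  (p1 p2 : pt) : Prop := in_F2 p1 p2 /\ px p2 >= px p1 + 1.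
Definition ord_up    (p1 p2 : pt) : Prop := in_F2 p1 p2 /\ py p1 >= py p2 + 1.
Definition ord_down  (p1 p2 : pt) : Prop := in_F2 p1 p2 /\ py p2 >= py p1 + 1.

Definition commonly_ordered (a1 a2 b1 b2 : pt) : Prop :=
  (ord_right a1 a2 /\ ord_right b1 b2) \/
  (ord_left a1 a2 /\ ord_left b1 b2) \/
  (ord_up a1 a2 /\ ord_up b1 b2) \/
  (ord_down a1 a2 /\ ord_down b1 b2).

Definition seg (p q : pt) (z : pt) : Prop :=
  exists s, 0 <= s <= 1 /\ z = padd p (pscale s (psub q p)).

(* A polygonal chain is given by its first vertex v0 and the list of the
   remaining vertices. *)
Fixpoint chain_img (v0 : pt) (rest : list pt) (z : pt) : Prop :=
  match rest with
  | nil => z = v0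
  | v1 :: r => seg v0 v1 z \/ chain_img v1 r z
  end.

Fixpoint chain_nondeg (v0 : pt) (rest : list pt) : Prop :=
  match rest with
  | nil => True
  | v1 :: r => v0 <> v1 /\ chain_nondeg v1 r
  end.

Fixpoint chain_len (v0 : pt) (rest : list pt) : R :=
  match rest with
  | nil => 0
  | v1 :: r => norm1 (psub v1 v0) + chain_len v1 r
  end.

(* Two directions have the same orientation iff they are parallel. *)
Definition cross (u v : pt) : R := px u * py v - py u * px v.

Fixpoint chain_turns (v0 : pt) (rest : list pt) : nat :=
  match rest with
  | v1 :: ((v2 :: _) as r) =>
      (if Req_EM_T (cross (psub v1 v0) (psub v2 v1)) 0 then 0%nat else 1%nat)
      + chain_turns v1 r
  | _ => 0%nat
  end.

Definition trajectory (t0 t1 : R) (a b : pt) (m : R -> pt)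
    (v0 : pt) (rest : list pt) : Prop :=
  t0 <= t1 /\
  (forall s t, t0 <= s <= t1 -> t0 <= t <= t1 ->
     norm1 (psub (m s) (m t)) <= Rabs (s - t)) /\
  m t0 = a /\ m t1 = b /\
  chain_nondeg v0 rest /\
  (forall z, (exists t, t0 <= t <= t1 /\ z = m t) <-> chain_img v0 rest z).

Definition feasible (t0 t1 : R) (m1 m2 : R -> pt) : Prop :=
  forall t, t0 <= t <= t1 -> in_F2 (m1 t) (m2 t).

From Stdlib Require Import Reals List Lra Lia Classical.
Open Scope R_scope.

(* Suppose the common ordering is x(p1) >= x(p2) + 1 (the other three are
   symmetric). Each robot follows an L-shaped path (horizontal, then vertical)
   from start to goal: it has one turn, length equal to the L1 distance, and
   stays in the bounding box of its endpoints, so its x-coordinate stays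
   between the start and goal values. Robots move one at a time. If
   x(b1) >= x(a2) + 1, robot 1 moves while robot 2 waits at a2, then robot 2
   moves while robot 1 waits at b1. Otherwise x(b2) <= x(b1) - 1 < x(a2) <= x(a1) - 1,
   and robot 2 can move first. *)

Definition between (u v w : R) : Prop := u <= w <= v \/ v <= w <= u.

Definition in_box (a b z : pt) : Prop :=
  between (px a) (px b) (px z) /\ between (py a) (py b) (py z).

Lemma between_l u v : between u v u.
Proof. unfold between; lra. Qed.

Lemma between_r u v : between u v v.
Proof. unfold between; lra. Qed.

Lemma between_convex u v x y s :
  between u v x -> between u v y -> 0 <= s <= 1 -> between u v (x + s * (y - x)).
Proof.
  unfold between; intros Hx Hy Hs.
  replace (x + s * (y - x)) with ((1 - s) * x + s * y) by ring.
  destruct Hx, Hy; [left | left | right | right]; split; nra.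
Qed.

Lemma between_scale s u v w : between u v w -> between (s * u) (s * v) (s * w).
Proof.
  unfold between; intros H.
  destruct (Rle_dec 0 s); destruct H; [left | right | right | left]; split; nra.
Qed.

Lemma in_box_l a b : in_box a b a.
Proof. split; apply between_l. Qed.

Lemma in_box_r a b : in_box a b b.
Proof. split; apply between_r. Qed.

Lemma seg_in_box a b p q z :
  in_box a b p -> in_box a b q -> seg p q z -> in_box a b z.
Proof.
  intros [Hpx Hpy] [Hqx Hqy] [s [Hs ->]].
  split; apply between_convex; assumption.
Qed.

Lemma pt_eq (p q : pt) : px p = px q -> py p = py q -> p = q.
Proof. destruct p, q; unfold px, py; simpl; intros -> ->; reflexivity. Qed.

Lemma norm1_psub_sym p q : norm1 (psub p q) = norm1 (psub q p).
Proof.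
  unfold norm1, psub, px, py; simpl.
  rewrite (Rabs_minus_sym (fst p)), (Rabs_minus_sym (snd p)); reflexivity.
Qed.

Lemma norm1_psub_triangle x y z :
  norm1 (psub x z) <= norm1 (psub x y) + norm1 (psub y z).
Proof.
  unfold norm1, psub, px, py; simpl.
  replace (fst x - fst z) with ((fst x - fst y) + (fst y - fst z)) by ring.
  replace (snd x - snd z) with ((snd x - snd y) + (snd y - snd z)) by ring.
  pose proof (Rabs_triang (fst x - fst y) (fst y - fst z)).
  pose proof (Rabs_triang (snd x - snd y) (snd y - snd z)).
  lra.
Qed.

Lemma norm1_psub_diag p : norm1 (psub p p) = 0.
Proof. unfold norm1, psub, px, py; simpl; rewrite !Rminus_diag, Rabs_R0; ring. Qed.

Lemma norm1_psub_gt0 p q : p <> q -> 0 < norm1 (psub q p).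
Proof.
  intros Hpq; unfold norm1, psub, px, py; simpl.
  pose proof (Rabs_pos (fst q - fst p)); pose proof (Rabs_pos (snd q - snd p)).
  destruct (Req_dec (fst q) (fst p)) as [Ex|Ex].
  - destruct (Req_dec (snd q) (snd p)) as [Ey|Ey].
    + exfalso; apply Hpq, pt_eq; symmetry; assumption.
    + pose proof (Rabs_pos_lt (snd q - snd p)); lra.
  - pose proof (Rabs_pos_lt (fst q - fst p)); lra.
Qed.

Lemma norm1_pscale s p : norm1 (pscale s p) = Rabs s * norm1 p.
Proof. unfold norm1, pscale, px, py; simpl; rewrite !Rabs_mult; ring. Qed.

Lemma norm1_corner a b :
  norm1 (psub (px b, py a) a) + norm1 (psub b (px b, py a)) = norm1 (psub a b).
Proof.
  unfold norm1, psub, px, py; simpl.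
  rewrite !Rminus_diag, Rabs_R0, (Rabs_minus_sym (fst b)), (Rabs_minus_sym (snd b)).
  ring.
Qed.

Lemma in_F2_sym p q : in_F2 p q -> in_F2 q p.
Proof.
  unfold in_F2, normInf, psub, px, py; simpl.
  rewrite (Rabs_minus_sym (fst q)), (Rabs_minus_sym (snd q)); trivial.
Qed.

Lemma in_F2_of_px_gap p q : 1 <= Rabs (px p - px q) -> in_F2 p q.
Proof. intros H; apply Rle_ge, (Rle_trans _ _ _ H), Rmax_l. Qed.

Lemma in_F2_of_py_gap p q : 1 <= Rabs (py p - py q) -> in_F2 p q.
Proof. intros H; apply Rle_ge, (Rle_trans _ _ _ H), Rmax_r. Qed.

Lemma feasible_sym t0 t1 m1 m2 : feasible t0 t1 m2 m1 -> feasible t0 t1 m1 m2.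
Proof. intros H t Ht; apply in_F2_sym, H, Ht. Qed.

Definition lipschitz_on (t0 t1 : R) (m : R -> pt) : Prop :=
  forall s t, t0 <= s <= t1 -> t0 <= t <= t1 -> norm1 (psub (m s) (m t)) <= Rabs (s - t).

Definition segment_motion (p q : pt) (t : R) : pt :=
  padd p (pscale (t / norm1 (psub q p)) (psub q p)).

Lemma segment_trajectory p q : p <> q ->
  trajectory 0 (norm1 (psub q p)) p q (segment_motion p q) p (q :: nil).
Proof.
  intros Hpq; pose proof (norm1_psub_gt0 p q Hpq) as Hd.
  unfold segment_motion; set (d := norm1 (psub q p)) in *.
  assert (Hstart : padd p (pscale (0 / d) (psub q p)) = p).
  { apply pt_eq; unfold padd, pscale, psub, px, py; simpl; field; lra. }
  assert (Hend : padd p (pscale (d / d) (psub q p)) = q).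
  { apply pt_eq; unfold padd, pscale, psub, px, py; simpl; field; lra. }
  split; [lra |]; split; [| split; [exact Hstart | split; [exact Hend | split]]].
  - intros s t _ _.
    replace (psub (padd p (pscale (s / d) (psub q p))) (padd p (pscale (t / d) (psub q p))))
      with (pscale ((s - t) / d) (psub q p))
      by (apply pt_eq; unfold padd, pscale, psub, px, py; simpl; field; lra).
    rewrite norm1_pscale; fold d; unfold Rdiv.
    rewrite Rabs_mult, Rabs_inv, (Rabs_pos_eq d) by lra.
    right; field; lra.
  - simpl; split; [intro E; apply Hpq, E | exact I].
  - intros z; simpl; split.
    + intros [t [Ht ->]]; left; exists (t / d); split; [| reflexivity].
      assert (Hinv : / d * d = 1) by (field; lra).
      pose proof (Rinv_0_lt_compat d Hd); unfold Rdiv; split; nra.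
    + intros [[s [Hs ->]] | ->].
      * exists (s * d); split; [nra |].
        replace (s * d / d) with s by (field; lra); reflexivity.
      * exists d; split; [lra | symmetry; exact Hend].
Qed.

Lemma const_trajectory a : trajectory 0 0 a a (fun _ => a) a nil.
Proof.
  split; [lra |]; split; [| split; [reflexivity | split; [reflexivity | split; [exact I |]]]].
  - intros s t _ _; rewrite norm1_psub_diag; apply Rabs_pos.
  - intros z; simpl; split; [intros [_ [_ ->]]; reflexivity | intros ->; exists 0; split; [lra | reflexivity]].
Qed.

Lemma lipschitz_on_cat T1 T2 m1 m2 :
  0 <= T1 -> m1 T1 = m2 0 -> lipschitz_on 0 T1 m1 -> lipschitz_on 0 T2 m2 ->
  lipschitz_on 0 (T1 + T2) (fun t => if Rle_dec t T1 then m1 t else m2 (t - T1)).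
Proof.
  intros HT1 Hjoin L1 L2.
  set (m := fun t => if Rle_dec t T1 then m1 t else m2 (t - T1)).
  assert (Hacross : forall s t, 0 <= s <= T1 -> T1 < t <= T1 + T2 ->
            norm1 (psub (m s) (m t)) <= Rabs (s - t)).
  { intros s t Hs Ht; unfold m.
    destruct (Rle_dec s T1); [| lra]; destruct (Rle_dec t T1); [lra |].
    pose proof (L1 s T1 ltac:(lra) ltac:(lra)) as E1.
    pose proof (L2 0 (t - T1) ltac:(lra) ltac:(lra)) as E2.
    rewrite <- Hjoin in E2; rewrite Rabs_left1 in E1, E2 by lra; rewrite Rabs_left1 by lra.
    pose proof (norm1_psub_triangle (m1 s) (m1 T1) (m2 (t - T1))); lra. }
  intros s t Hs Ht.
  destruct (Rle_dec s T1) as [Hs1|Hs1]; destruct (Rle_dec t T1) as [Ht1|Ht1].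
  - unfold m; destruct (Rle_dec s T1); [| lra]; destruct (Rle_dec t T1); [| lra].
    apply L1; lra.
  - apply Hacross; lra.
  - rewrite norm1_psub_sym, Rabs_minus_sym; apply Hacross; lra.
  - unfold m; destruct (Rle_dec s T1); [lra |]; destruct (Rle_dec t T1); [lra |].
    replace (s - t) with ((s - T1) - (t - T1)) by ring; apply L2; lra.
Qed.

Lemma trajectory_cons T1 T2 a c b m1 m2 r :
  trajectory 0 T1 a c m1 a (c :: nil) -> trajectory 0 T2 c b m2 c r ->
  trajectory 0 (T1 + T2) a b
    (fun t => if Rle_dec t T1 then m1 t else m2 (t - T1)) a (c :: r).
Proof.
  intros (HT1 & L1 & Ha & Hc & Hnd1 & Him1) (HT2 & L2 & Hc' & Hb & Hnd2 & Him2).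
  split; [lra |]; split.
  { apply lipschitz_on_cat; [lra | congruence | exact L1 | exact L2]. }
  split; [destruct (Rle_dec 0 T1); [exact Ha | lra] |].
  split.
  { destruct (Rle_dec (T1 + T2) T1).
    - replace (T1 + T2) with T1 by lra; replace T2 with 0 in Hb by lra; congruence.
    - replace (T1 + T2 - T1) with T2 by ring; exact Hb. }
  split; [split; [apply Hnd1 | exact Hnd2] |].
  intros z; simpl in Him1 |- *; split.
  - intros [t [Ht ->]]; destruct (Rle_dec t T1).
    + destruct (proj1 (Him1 (m1 t))) as [Hseg | ->]; [exists t; split; [lra | reflexivity] | |].
      * left; exact Hseg.
      * right; apply Him2; exists 0; split; [lra | symmetry; exact Hc'].
    + right; apply Him2; exists (t - T1); split; [lra | reflexivity].
  - intros [Hseg | Hz].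
    + destruct (proj2 (Him1 z) (or_introl Hseg)) as [t [Ht ->]].
      exists t; split; [lra |]; destruct (Rle_dec t T1); [reflexivity | lra].
    + destruct (proj2 (Him2 z) Hz) as [t [Ht ->]].
      exists (t + T1); split; [lra |]; destruct (Rle_dec (t + T1) T1).
      * replace t with 0 by lra; rewrite Rplus_0_l, Hc, Hc'; reflexivity.
      * replace (t + T1 - T1) with t by ring; reflexivity.
Qed.

Lemma trajectory_reparam T L a b m v r (g : R -> R) :
  trajectory 0 L a b m v r -> 0 <= T -> g 0 = 0 -> g T = L ->
  (forall t, 0 <= t <= T -> 0 <= g t <= L) ->
  (forall s t, Rabs (g s - g t) <= Rabs (s - t)) ->
  (forall s, 0 <= s <= L -> exists t, 0 <= t <= T /\ g t = s) ->
  trajectory 0 T a b (fun t => m (g t)) v r.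
Proof.
  intros (_ & HL & Ha & Hb & Hnd & Him) HT Hg0 HgT Hrange Hlip Hsurj.
  split; [exact HT |]; split.
  { intros s t Hs Ht; eapply Rle_trans; [apply HL; apply Hrange; assumption | apply Hlip]. }
  split; [rewrite Hg0; exact Ha |]; split; [rewrite HgT; exact Hb |]; split; [exact Hnd |].
  intros z; rewrite <- Him; split.
  - intros [t [Ht ->]]; exists (g t); split; [apply Hrange; exact Ht | reflexivity].
  - intros [s [Hs ->]]; destruct (Hsurj s Hs) as [t [Ht <-]]; exists t; split; [exact Ht | reflexivity].
Qed.

Lemma trajectory_hold T L a b m v r :
  trajectory 0 L a b m v r -> L <= T ->
  trajectory 0 T a b (fun t => m (Rmin t L)) v r.
Proof.
  intros Hm HLT; pose proof (proj1 Hm) as HL.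
  apply (trajectory_reparam T L _ _ _ _ _ _ Hm); [lra | | | | |].
  - apply Rmin_left; lra.
  - apply Rmin_right; lra.
  - intros t Ht; unfold Rmin; destruct Rle_dec; lra.
  - intros s t; unfold Rmin; repeat destruct Rle_dec; unfold Rabs; repeat destruct Rcase_abs; lra.
  - intros s Hs; exists s; split; [lra | apply Rmin_left; lra].
Qed.

Lemma trajectory_delay d L a b m v r :
  trajectory 0 L a b m v r -> 0 <= d ->
  trajectory 0 (d + L) a b (fun t => m (Rmax (t - d) 0)) v r.
Proof.
  intros Hm Hd; pose proof (proj1 Hm) as HL.
  apply (trajectory_reparam (d + L) L _ _ _ _ _ _ Hm); [lra | | | | |].
  - apply Rmax_right; lra.
  - replace (d + L - d) with L by ring; apply Rmax_left; lra.
  - intros t Ht; unfold Rmax; destruct Rle_dec; lra.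
  - intros s t; unfold Rmax; repeat destruct Rle_dec; unfold Rabs; repeat destruct Rcase_abs; lra.
  - intros s Hs; exists (s + d); split; [lra |].
    replace (s + d - d) with s by ring; apply Rmax_left; lra.
Qed.

Lemma trajectory_img L a b m v r t :
  trajectory 0 L a b m v r -> 0 <= t <= L -> chain_img v r (m t).
Proof. intros (_ & _ & _ & _ & _ & Him) Ht; apply Him; exists t; split; [exact Ht | reflexivity]. Qed.

Lemma straight_trajectory a b : exists L m v r,
  trajectory 0 L a b m v r /\ chain_len v r = norm1 (psub a b) /\
  chain_turns v r = 0%nat /\ (forall z, chain_img v r z -> in_box a b z).
Proof.
  destruct (classic (a = b)) as [<- | Hab].
  - exists 0, (fun _ => a), a, nil; split; [apply const_trajectory |].
    split; [simpl; rewrite norm1_psub_diag; reflexivity |]; split; [reflexivity |].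
    simpl; intros z ->; apply in_box_l.
  - exists (norm1 (psub b a)), (segment_motion a b), a, (b :: nil).
    split; [apply segment_trajectory, Hab |].
    split; [simpl; rewrite norm1_psub_sym; ring |]; split; [reflexivity |].
    intros z [Hz | ->]; [exact (seg_in_box _ _ _ _ _ (in_box_l a b) (in_box_r a b) Hz) | apply in_box_r].
Qed.

Lemma staircase_trajectory a b : exists L m v r,
  trajectory 0 L a b m v r /\ chain_len v r = norm1 (psub a b) /\
  (chain_turns v r <= 1)%nat /\ (forall z, chain_img v r z -> in_box a b z).
Proof.
  set (c := (px b, py a)).
  assert (Hc : in_box a b c) by (split; [apply between_r | apply between_l]).
  destruct (classic (a = c \/ c = b)) as [Hdeg | Hnondeg].
  - destruct (straight_trajectory a b) as (L & m & v & r & Hm & Hlen & Hturns & Hbox).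
    exists L, m, v, r; rewrite Hturns; auto.
  - assert (Hac : a <> c) by tauto; assert (Hcb : c <> b) by tauto.
    eexists _, _, a, (c :: b :: nil).
    split; [apply trajectory_cons; apply segment_trajectory; assumption |].
    split; [simpl; rewrite Rplus_0_r; apply norm1_corner |].
    split; [simpl; destruct Req_EM_T; simpl; lia |].
    pose proof (in_box_l a b); pose proof (in_box_r a b).
    intros z [Hz | [Hz | ->]]; eauto using seg_in_box.
Qed.

Lemma sequential_schedule L1 L2 a1 b1 a2 b2 m1 m2 v1 r1 v2 r2 :
  trajectory 0 L1 a1 b1 m1 v1 r1 -> trajectory 0 L2 a2 b2 m2 v2 r2 ->
  (forall t, 0 <= t <= L1 -> in_F2 (m1 t) a2) ->
  (forall t, 0 <= t <= L2 -> in_F2 b1 (m2 t)) ->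
  exists T n1 n2, trajectory 0 T a1 b1 n1 v1 r1 /\ trajectory 0 T a2 b2 n2 v2 r2 /\
    feasible 0 T n1 n2.
Proof.
  intros Hm1 Hm2 Hfirst Hsecond.
  pose proof Hm1 as (HL1 & _ & _ & Hb1 & _); pose proof Hm2 as (HL2 & _ & Ha2 & _).
  exists (L1 + L2), (fun t => m1 (Rmin t L1)), (fun t => m2 (Rmax (t - L1) 0)).
  split; [apply trajectory_hold; [assumption | lra] |].
  split; [apply trajectory_delay; assumption |].
  intros t Ht; destruct (Rle_dec t L1).
  - rewrite Rmin_left, Rmax_right, Ha2 by lra; apply Hfirst; lra.
  - rewrite Rmin_right, Rmax_left, Hb1 by lra; apply Hsecond; lra.
Qed.

Definition optimal_one_turn_schedule (a1 a2 b1 b2 : pt) : Prop :=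
  exists (t0 t1 : R) (m1 m2 : R -> pt) (v1 : pt) (r1 : list pt)
         (v2 : pt) (r2 : list pt),
    trajectory t0 t1 a1 b1 m1 v1 r1 /\
    trajectory t0 t1 a2 b2 m2 v2 r2 /\
    feasible t0 t1 m1 m2 /\
    chain_len v1 r1 + chain_len v2 r2 = norm1 (psub a1 b1) + norm1 (psub a2 b2) /\
    (chain_turns v1 r1 <= 1)%nat /\ (chain_turns v2 r2 <= 1)%nat.

Definition separating (f : pt -> R) : Prop :=
  forall p q, f p >= f q + 1 -> in_F2 p q.

Definition box_monotone (f : pt -> R) : Prop :=
  forall a b z, in_box a b z -> between (f a) (f b) (f z).

Lemma separating_scale_px s : Rabs s = 1 -> separating (fun p => s * px p).
Proof.
  intros Hs p q H; apply in_F2_of_px_gap.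
  rewrite <- (Rmult_1_l (Rabs _)), <- Hs, <- Rabs_mult.
  eapply Rle_trans; [| apply Rle_abs]; lra.
Qed.

Lemma separating_scale_py s : Rabs s = 1 -> separating (fun p => s * py p).
Proof.
  intros Hs p q H; apply in_F2_of_py_gap.
  rewrite <- (Rmult_1_l (Rabs _)), <- Hs, <- Rabs_mult.
  eapply Rle_trans; [| apply Rle_abs]; lra.
Qed.

Lemma box_monotone_scale_px s : box_monotone (fun p => s * px p).
Proof. intros a b z [Hx _]; apply between_scale, Hx. Qed.

Lemma box_monotone_scale_py s : box_monotone (fun p => s * py p).
Proof. intros a b z [_ Hy]; apply between_scale, Hy. Qed.

Lemma optimal_one_turn_schedule_of_functional (f : pt -> R) a1 a2 b1 b2 :
  separating f -> box_monotone f -> f a1 >= f a2 + 1 -> f b1 >= f b2 + 1 ->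
  optimal_one_turn_schedule a1 a2 b1 b2.
Proof.
  intros Hsep Hmono Ha Hb.
  destruct (staircase_trajectory a1 b1) as (L1 & m1 & v1 & r1 & Hm1 & Hlen1 & Hturns1 & Hbox1).
  destruct (staircase_trajectory a2 b2) as (L2 & m2 & v2 & r2 & Hm2 & Hlen2 & Hturns2 & Hbox2).
  assert (Hf1 : forall t, 0 <= t <= L1 -> between (f a1) (f b1) (f (m1 t)))
    by (intros; apply Hmono, Hbox1, (trajectory_img _ _ _ _ _ _ _ Hm1); assumption).
  assert (Hf2 : forall t, 0 <= t <= L2 -> between (f a2) (f b2) (f (m2 t)))
    by (intros; apply Hmono, Hbox2, (trajectory_img _ _ _ _ _ _ _ Hm2); assumption).
  assert (Hsched : exists T n1 n2, trajectory 0 T a1 b1 n1 v1 r1 /\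
            trajectory 0 T a2 b2 n2 v2 r2 /\ feasible 0 T n1 n2).
  { destruct (Rle_dec (f a2 + 1) (f b1)).
    - apply sequential_schedule with L1 L2 m1 m2; [assumption | assumption | |];
        intros t Ht; apply Hsep;
        [pose proof (Hf1 t Ht) | pose proof (Hf2 t Ht)]; unfold between in *; lra.
    - destruct (sequential_schedule L2 L1 a2 b2 a1 b1 m2 m1 v2 r2 v1 r1)
        as (T & n2 & n1 & Hn2 & Hn1 & Hfeas); [assumption | assumption | | |].
      + intros t Ht; apply in_F2_sym, Hsep; pose proof (Hf2 t Ht); unfold between in *; lra.
      + intros t Ht; apply in_F2_sym, Hsep; pose proof (Hf1 t Ht); unfold between in *; lra.
      + exists T, n1, n2; split; [| split; [| apply feasible_sym]]; assumption. }
  destruct Hsched as (T & n1 & n2 & Hn1 & Hn2 & Hfeas).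
  exists 0, T, n1, n2, v1, r1, v2, r2; rewrite Hlen1, Hlen2; intuition.
Qed.

Theorem corollary3p4 (a1 a2 b1 b2 : pt) :
  in_F2 a1 a2 -> in_F2 b1 b2 -> commonly_ordered a1 a2 b1 b2 ->
  exists (t0 t1 : R) (m1 m2 : R -> pt) (v1 : pt) (r1 : list pt)
         (v2 : pt) (r2 : list pt),
    trajectory t0 t1 a1 b1 m1 v1 r1 /\
    trajectory t0 t1 a2 b2 m2 v2 r2 /\
    feasible t0 t1 m1 m2 /\
    chain_len v1 r1 + chain_len v2 r2 = norm1 (psub a1 b1) + norm1 (psub a2 b2) /\
    (chain_turns v1 r1 <= 1)%nat /\ (chain_turns v2 r2 <= 1)%nat.
Proof.
  intros _ _ Hco; fold (optimal_one_turn_schedule a1 a2 b1 b2).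
  assert (Hopp : Rabs (-1) = 1) by (rewrite Rabs_left by lra; lra).
  destruct Hco as [[[_ H1] [_ H2]] | [[[_ H1] [_ H2]] | [[[_ H1] [_ H2]] | [[_ H1] [_ H2]]]]].
  - apply (optimal_one_turn_schedule_of_functional (fun p => 1 * px p));
      [apply separating_scale_px, Rabs_R1 | apply box_monotone_scale_px | lra | lra].
  - apply (optimal_one_turn_schedule_of_functional (fun p => -1 * px p));
      [apply separating_scale_px, Hopp | apply box_monotone_scale_px | lra | lra].
  - apply (optimal_one_turn_schedule_of_functional (fun p => 1 * py p));
      [apply separating_scale_py, Rabs_R1 | apply box_monotone_scale_py | lra | lra].
  - apply (optimal_one_turn_schedule_of_functional (fun p => -1 * py p));
      [apply separating_scale_py, Hopp | apply box_monotone_scale_py | lra | lra].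
Qed.
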